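(* Let $m\ge 1$, $p\ge 2m+3$, and let $\Sigma=(\sigma_{ij})\in\mathbb{R}^{p\times p}$ be positive definite such that every $(p-1)\times(p-1)$ principal submatrix of $\Sigma$ lies in $F_{p-1,m}$. Write $\Sigma_{\setminus p,\setminus p}=\Delta+\Gamma\Gamma^t$ and $\Sigma_{\setminus 1,\setminus 1}=D+GG^t$ with $\Delta, D$ positive definite diagonal $(p-1)\times(p-1)$ matrices and $\Gamma,G\in\mathbb{R}^{(p-1)\times m}$, where the rows of $\Delta,\Gamma$ are indexed by $1,\dots,p-1$ and the rows of $D,G$ are indexed by $2,\dots,p$ (matching the rows of $\Sigma$). Suppose: (i) $\Gamma_{\setminus 1}=G_{\setminus p}$, i.e. the rows of $\Gamma$ and $G$ indexed by $2,\dots,p-1$ coincide; and (ii) there are disjoint subsets $B,C\subseteq\{2,\dots,p-1\}$ with $|B|=|C|=m$ such that $\det(\Sigma_{B,C})\neq 0$. Then $\Sigma\in F_{p,m}$.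
   Context: For integers $p\ge 1$, $m\ge 1$, $F_{p,m}=\{\Delta+\Gamma\Gamma^t : \Delta \text{ a positive definite diagonal } p\times p \text{ matrix},\ \Gamma\in\mathbb{R}^{p\times m}\}$. For a matrix $\Lambda$ with row index set $I$ and column index set $J$ and $A\subseteq I$, $B\subseteq J$: $\Lambda_{A,B}$ is the submatrix with rows in $A$ and columns in $B$; $\Lambda_A=\Lambda_{A,J}$; $\Lambda_{\setminus A,\setminus B}=\Lambda_{I\setminus A,J\setminus B}$; $\setminus i$ means $\setminus\{i\}$, so $\Lambda_{\setminus i}$ is $\Lambda$ with row $i$ removed and $\Sigma_{\setminus i,\setminus i}$ is $\Sigma$ with row and column $i$ removed. *)

(* Real numbers are modelled by an arbitrary real closed field. *)
From HB Require Import structures.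
From mathcomp Require Export all_boot all_order all_algebra.
Set Implicit Arguments. Unset Strict Implicit. Unset Printing Implicit Defensive.
Import Order.TTheory GRing.Theory Num.Theory.
Local Open Scope ring_scope.

Definition posdef (R : realFieldType) (n : nat) (S : 'M[R]_n) : Prop :=
  S^T = S /\ forall x : 'cV[R]_n, x != 0 -> 0 < (x^T *m S *m x) 0 0.

Definition inF (R : realFieldType) (n m : nat) (S : 'M[R]_n) : Prop :=
  exists (d : 'rV[R]_n) (G : 'M[R]_(n, m)),
    (forall i, 0 < d 0 i) /\ S = diag_mx d + G *m G^T.

(* Sigma_{B,C} as an m x m matrix, rows/columns in increasing index order
   (meaningful when #|B| = #|C| = m). *)
Definition subsq (R : ringType) (n m : nat) (A : 'M[R]_n.+1)
  (B C : {set 'I_n.+1}) : 'M[R]_m :=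
  \matrix_(i < m, j < m) A (nth ord0 (enum B) i) (nth ord0 (enum C) j).

From HB Require Import structures.
From mathcomp Require Import all_boot all_order all_algebra.
Set Implicit Arguments. Unset Strict Implicit. Unset Printing Implicit Defensive.
Import Order.TTheory GRing.Theory Num.Theory.
Local Open Scope ring_scope.

(* Stacking the rows of
   Gamma and the last row of G gives loadings L, and the uniquenesses glue
   likewise; then Sigma and diag d + L L^T agree everywhere except possibly at
   the corner (0, n+1), the only pair not contained in either minor.
   To identify the corner we choose an interior index j outside B u C (a
   counting argument, using p >= 2m+3) and factor the minor without j as
   e + H H^T.  Both L L^T and H H^T agree with Sigma on the cross formed by
   the invertible block B x C, the row 0 over C and the column n+1 over B; a
   Gram matrix of rank <= m is determined at (u, v) by such a cross through
   the Schur-complement formula r M^-1 s.  Hence the corner of L L^T equals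
   that of H H^T, which is the corner of Sigma. *)

Lemma gram_entryE (R : pzRingType) (p q m : nat)
    (A : 'M[R]_(p, m)) (A' : 'M[R]_(q, m)) x y x' y' :
  row x A = row x' A' -> row y A = row y' A' ->
  (A *m A^T) x y = (A' *m A'^T) x' y'.
Proof.
have gram_rows k (M : 'M[R]_(k, m)) i j :
    (M *m M^T) i j = (row i M *m (row j M)^T) 0 0.
  by rewrite !mxE; apply: eq_bigr => l _; rewrite !mxE.
by move=> ex ey; rewrite !gram_rows ex ey.
Qed.

Lemma gram_sandwich (R : comUnitRingType) (m : nat) (X Y : 'M[R]_m)
    (x y : 'rV[R]_m) :
  X *m Y^T \in unitmx ->
  (x *m Y^T) *m invmx (X *m Y^T) *m (X *m y^T) = x *m y^T.
Proof.
move=> uXY; have uX : X \in unitmx by move: uXY; rewrite unitmx_mul => /andP[].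
have -> : x *m Y^T = (x *m invmx X) *m (X *m Y^T) by rewrite mulmxA mulmxKV.
by rewrite mulmxK // mulmxA mulmxKV.
Qed.

Section GramIdentification.
Variables (R : comUnitRingType) (p m : nat) (b c : 'I_m -> 'I_p) (u v : 'I_p).

Lemma gram_schur_entry (F : 'M[R]_(p, m)) :
  let P := F *m F^T in mxsub b c P \in unitmx ->
  P u v = (row u (colsub c P) *m invmx (mxsub b c P) *m col v (rowsub b P)) 0 0.
Proof.
have eM : mxsub b c (F *m F^T) = rowsub b F *m (rowsub c F)^T.
  by rewrite mxsub_mul trmx_mxsub.
have er : row u (colsub c (F *m F^T)) = row u F *m (rowsub c F)^T.
  by rewrite -mulmx_colsub row_mul trmx_mxsub.
have es : col v (rowsub b (F *m F^T)) = rowsub b F *m (row v F)^T.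
  by rewrite -mul_rowsub_mx colEsub -mulmx_colsub tr_row.
move=> /= uP; rewrite eM er es gram_sandwich -?eM //.
by rewrite !mxE; apply: eq_bigr => l _; rewrite !mxE.
Qed.

Definition cross_agree (S P : 'M[R]_p) : Prop :=
  [/\ forall i k, S (b i) (c k) = P (b i) (c k),
      forall k, S u (c k) = P u (c k)
    & forall i, S (b i) v = P (b i) v].

Lemma gram_entry_unique (S : 'M[R]_p) (F1 F2 : 'M[R]_(p, m)) :
  mxsub b c S \in unitmx ->
  cross_agree S (F1 *m F1^T) -> cross_agree S (F2 *m F2^T) ->
  (F1 *m F1^T) u v = (F2 *m F2^T) u v.
Proof.
have crossE P : cross_agree S P ->
    [/\ mxsub b c P = mxsub b c S, row u (colsub c P) = row u (colsub c S)
       & col v (rowsub b P) = col v (rowsub b S)].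
  by case=> eB eU eV; split; apply/matrixP => i k; rewrite !mxE ?ord1 ?eB ?eU ?eV.
move=> uS /crossE[eM1 eU1 eV1] /crossE[eM2 eU2 eV2].
by rewrite !gram_schur_entry ?eM1 ?eM2 ?eU1 ?eU2 ?eV1 ?eV2.
Qed.

End GramIdentification.

Lemma lift_max_inord (n : nat) (x : 'I_n.+2) :
  (x < n.+1)%N -> lift ord_max (inord x : 'I_n.+1) = x.
Proof. by move=> h; apply: val_inj; rewrite /= /bump inordK // leqNgt h. Qed.

Lemma lift0_inord (n : nat) (x : 'I_n.+2) :
  (0 < x)%N -> lift ord0 (inord x.-1 : 'I_n.+1) = x.
Proof.
move=> h; have h1 : (x.-1 < n.+1)%N by rewrite -ltnS prednK // ltn_ord.
by apply: val_inj; rewrite /= /bump inordK // add1n prednK.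
Qed.

Lemma minor_factor_entry (R : pzRingType) (p m : nat) (S : 'M[R]_p.+1)
    (j : 'I_p.+1) (e : 'rV[R]_p) (H : 'M[R]_(p, m)) :
  row' j (col' j S) = diag_mx e + H *m H^T ->
  forall x y : 'I_p, S (lift j x) (lift j y) = e 0 x *+ (x == y) + (H *m H^T) x y.
Proof. by move=> HS x y; have := congr1 (fun M : 'M_p => M x y) HS; rewrite !mxE. Qed.

Lemma minor_factor_offdiag (R : pzRingType) (p m : nat) (S : 'M[R]_p.+1)
    (j : 'I_p.+1) (e : 'rV[R]_p) (H : 'M[R]_(p, m)) :
  row' j (col' j S) = diag_mx e + H *m H^T ->
  exists F : 'M[R]_(p.+1, m), forall x y, x != j -> y != j -> x != y ->
    S x y = (F *m F^T) x y.
Proof.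
move=> HS; exists (\matrix_(x, k) if unlift j x is Some y then H y k else 0).
set F := \matrix_(_, _) _ => x y.
rewrite !(eq_sym _ j) => /unlift_some[x' -> _] /unlift_some[y' -> _].
rewrite (inj_eq (@lift_inj _ j)) => /negbTE xy.
rewrite (minor_factor_entry HS) xy mulr0n add0r.
by apply: gram_entryE; apply/rowP => k; rewrite !mxE liftK.
Qed.

Lemma exists_free_index (n m : nat) (B C : {set 'I_n.+2}) :
  #|B| = m -> #|C| = m -> (2 * m + 3 <= n.+2)%N ->
  exists j : 'I_n.+2, [/\ j \notin B, j \notin C, j != ord0 & j != ord_max].
Proof.
move=> card_B card_C hp; set E := B :|: C :|: [set ord0; ord_max].
have cE : (#|E| <= 2 * m + 2)%N.
  apply: (leq_trans (leq_card_setU _ _)); apply: leq_add.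
    by rewrite mul2n -addnn -{1}card_B -card_C leq_card_setU.
  by rewrite cards2; case: (_ != _).
have [j] : exists j, j \in ~: E.
  apply/card_gt0P; rewrite cardsCs setCK card_ord subn_gt0.
  by apply: leq_ltn_trans cE _; rewrite -addn1 -addnA.
by rewrite !inE !negb_or => /and3P[/andP[jB jC] j0 jmax]; exists j.
Qed.

Lemma end_points (n : nat) (x y : 'I_n.+2) :
  ~~ (((x < n.+1) && (y < n.+1)) || ((0 < x) && (0 < y)))%N ->
  (x = ord0 /\ y = ord_max) \/ (x = ord_max /\ y = ord0).
Proof.
have top_max (z : 'I_n.+2) : (n.+1 <= z)%N -> z = ord_max.
  by move=> hz; apply/val_inj/eqP; rewrite eqn_leq -ltnS ltn_ord.
have bot_0 (z : 'I_n.+2) : (z <= 0)%N -> z = ord0.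
  by move=> hz; apply/val_inj/eqP; rewrite /= -leqn0.
rewrite negb_or !negb_and -!leqNgt => /andP[/orP[hx|hy] /orP[x0|y0]].
- by have := leq_trans hx x0.
- by right; split; [apply: top_max | apply: bot_0].
- by left; split; [apply: bot_0 | apply: top_max].
- by have := leq_trans hy y0.
Qed.

Section Glueing.
Variables (R : comUnitRingType) (n m : nat) (Sigma : 'M[R]_n.+2).
Variables (Delta D : 'rV[R]_n.+1) (Gamma G : 'M[R]_(n.+1, m)).
Hypothesis SigmaD :
  row' ord_max (col' ord_max Sigma) = diag_mx Delta + Gamma *m Gamma^T.
Hypothesis SigmaG : row' ord0 (col' ord0 Sigma) = diag_mx D + G *m G^T.
Hypothesis GammaG :
  forall i k : 'I_n.+1, nat_of_ord i = k.+1 -> row i Gamma = row k G.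

Definition glued_loadings : 'M[R]_(n.+2, m) :=
  \matrix_(x, k) if (x < n.+1)%N then Gamma (inord x) k else G (inord x.-1) k.

Definition glued_uniquenesses : 'rV[R]_n.+2 :=
  \row_x if (x < n.+1)%N then Delta 0 (inord x) else D 0 (inord x.-1).

Local Notation L := glued_loadings.

Lemma glued_top (x : 'I_n.+2) : (x < n.+1)%N -> row x L = row (inord x) Gamma.
Proof. by move=> hx; apply/rowP => k; rewrite !mxE hx. Qed.

Lemma glued_bottom (x : 'I_n.+2) : (0 < x)%N -> row x L = row (inord x.-1) G.
Proof.
move=> x0; apply/rowP => k; rewrite !mxE; case: ifP => // hx.
have hx1 : (x.-1 < n.+1)%N by rewrite -ltnS prednK // ltn_ord.
have := @GammaG (inord x) (inord x.-1); rewrite !inordK // prednK // => /(_ erefl).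
by move/rowP/(_ k); rewrite !mxE.
Qed.

Lemma Sigma_top (x y : 'I_n.+2) : (x < n.+1)%N -> (y < n.+1)%N ->
  Sigma x y = Delta 0 (inord x) *+ (x == y) + (L *m L^T) x y.
Proof.
move=> hx hy; rewrite -{1}(lift_max_inord hx) -{1}(lift_max_inord hy).
rewrite (minor_factor_entry SigmaD) -(inj_eq (@lift_inj _ ord_max)).
by rewrite !lift_max_inord // (gram_entryE (glued_top hx) (glued_top hy)).
Qed.

Lemma Sigma_bottom (x y : 'I_n.+2) : (0 < x)%N -> (0 < y)%N ->
  Sigma x y = D 0 (inord x.-1) *+ (x == y) + (L *m L^T) x y.
Proof.
move=> hx hy; rewrite -{1}(lift0_inord hx) -{1}(lift0_inord hy).
rewrite (minor_factor_entry SigmaG) -(inj_eq (@lift_inj _ ord0)).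
by rewrite !lift0_inord // (gram_entryE (glued_bottom hx) (glued_bottom hy)).
Qed.

Lemma Sigma_diag (x : 'I_n.+2) :
  Sigma x x = (diag_mx glued_uniquenesses + L *m L^T) x x.
Proof.
rewrite [in RHS]mxE [diag_mx _ _ _]mxE eqxx mulr1n mxE.
case: ifP => hx; first by rewrite Sigma_top // eqxx.
by rewrite Sigma_bottom ?eqxx //; move: hx; case: (nat_of_ord x).
Qed.

Lemma Sigma_offdiag (x y : 'I_n.+2) : x != y ->
  (((x < n.+1) && (y < n.+1)) || ((0 < x) && (0 < y)))%N ->
  Sigma x y = (L *m L^T) x y.
Proof.
move=> /negbTE xy /orP[/andP[hx hy]|/andP[hx hy]].
  by rewrite Sigma_top // xy mulr0n add0r.
by rewrite Sigma_bottom // xy mulr0n add0r.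
Qed.

(* The only entry not covered by the two minors is the corner (0, n.+1).  It
   is identified through a third minor, without an interior index j, whose
   factorization agrees with L L^T on the cross of an invertible block b x c
   avoiding j and the end points. *)
Lemma Sigma_corner (j : 'I_n.+2) (e : 'rV[R]_n.+1) (H : 'M[R]_(n.+1, m))
    (b c : 'I_m -> 'I_n.+2) :
  row' j (col' j Sigma) = diag_mx e + H *m H^T ->
  j != ord0 -> j != ord_max ->
  (forall i, (0 < b i < n.+1)%N /\ b i != j) ->
  (forall k, (0 < c k < n.+1)%N /\ c k != j) ->
  (forall i k, b i != c k) ->
  mxsub b c Sigma \in unitmx ->
  Sigma ord0 ord_max = (L *m L^T) ord0 ord_max.
Proof.
move=> SigmaH j0 jmax hb hc bc unit_bc.
have ord0_c k : ord0 != c k.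
  by have [/andP[c0 _] _] := hc k; rewrite -val_eqE /= neq_ltn c0.
have b_max i : b i != ord_max.
  by have [/andP[_ bn] _] := hb i; rewrite -val_eqE /= neq_ltn bn.
have [F SigmaF] := minor_factor_offdiag SigmaH.
have -> : Sigma ord0 ord_max = (F *m F^T) ord0 ord_max.
  by apply: SigmaF; rewrite // eq_sym.
apply/esym/(gram_entry_unique unit_bc); split=> [i k|k|i].
- apply: Sigma_offdiag; first exact: bc.
  by have [/andP[-> ->] _] := hb i; have [/andP[-> ->] _] := hc k.
- apply: Sigma_offdiag; first exact: ord0_c.
  by have [/andP[_ ->] _] := hc k.
- apply: Sigma_offdiag; first exact: b_max.
  by have [/andP[-> _] _] := hb i; rewrite orbT.
- by apply: SigmaF; [have [] := hb i | have [] := hc k | exact: bc].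
- by apply: SigmaF; [rewrite eq_sym | have [] := hc k | exact: ord0_c].
- by apply: SigmaF; [have [] := hb i | rewrite eq_sym | exact: b_max].
Qed.

(* Once the corner is identified, symmetry of Sigma completes the
   factorization. *)
Lemma glued_factorization :
  Sigma^T = Sigma -> Sigma ord0 ord_max = (L *m L^T) ord0 ord_max ->
  Sigma = diag_mx glued_uniquenesses + L *m L^T.
Proof.
move=> symS corner; apply/matrixP => x y.
have [<-|xy] := eqVneq x y; first exact: Sigma_diag.
rewrite mxE [diag_mx _ x y]mxE (negbTE xy) mulr0n add0r.
have [covered|/end_points[[-> ->]|[-> ->]]] := boolP
  (((x < n.+1) && (y < n.+1)) || ((0 < x) && (0 < y)))%N.
- exact: Sigma_offdiag.
- exact: corner.
- have symL : (L *m L^T)^T = L *m L^T by rewrite trmx_mul trmxK.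
  by rewrite -[in LHS]symS mxE corner -[in RHS]symL [in RHS]mxE.
Qed.

End Glueing.

Theorem lemma2 (R : rcfType) (m n : nat) (Sigma : 'M[R]_n.+1)
  (Delta : 'rV[R]_n) (Gamma : 'M[R]_(n, m)) (D : 'rV[R]_n) (G : 'M[R]_(n, m))
  (B C : {set 'I_n.+1}) :
  (1 <= m)%N -> (2 * m + 3 <= n.+1)%N ->
  posdef Sigma ->
  (forall i : 'I_n.+1, inF m (row' i (col' i Sigma))) ->
  (forall i, 0 < Delta 0 i) ->
  row' ord_max (col' ord_max Sigma) = diag_mx Delta + Gamma *m Gamma^T ->
  (forall i, 0 < D 0 i) ->
  row' ord0 (col' ord0 Sigma) = diag_mx D + G *m G^T ->
  (forall i k : 'I_n, nat_of_ord i = k.+1 -> row i Gamma = row k G) ->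
  [disjoint B & C] ->
  (forall b, b \in B -> (0 < b < n)%N) ->
  (forall c, c \in C -> (0 < c < n)%N) ->
  #|B| = m -> #|C| = m ->
  \det (subsq m Sigma B C) != 0 ->
  inF m Sigma.
Proof.
case: n Sigma Delta Gamma D G B C => [|n] Sigma Delta Gamma D G B C.
  by rewrite addn3. (* p = 1 violates p >= 2m + 3 *)
move=> _ hp [symS _] hF Delta_pos SigmaD D_pos SigmaG GammaG dBC hB hC.
move=> card_B card_C det_BC.
have [j [jB jC j0 jmax]] := exists_free_index card_B card_C hp.
have [e [H [_ SigmaH]]] := hF j.
pose b (i : 'I_m) := nth ord0 (enum B) i.
pose c (k : 'I_m) := nth ord0 (enum C) k.
have b_in i : b i \in B by rewrite -mem_enum mem_nth // -cardE card_B.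
have c_in k : c k \in C by rewrite -mem_enum mem_nth // -cardE card_C.
have corner := Sigma_corner SigmaD SigmaG GammaG SigmaH j0 jmax.
exists (glued_uniquenesses Delta D), (glued_loadings Gamma G); split.
  by move=> x; rewrite mxE; case: ifP => _; [exact: Delta_pos | exact: D_pos].
apply: (glued_factorization SigmaD SigmaG GammaG symS); apply: (corner b c).
- by move=> i; split; [exact: hB | apply: contraNneq jB => <-].
- by move=> k; split; [exact: hC | apply: contraNneq jC => <-].
- by move=> i k; apply: contraTneq (c_in k) => <-; rewrite (disjointFr dBC (b_in i)).
- by rewrite unitmxE unitfE; exact: det_BC.
Qed.
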